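(* If $G$ is a connected graph and $n\ge 1$, then $\mathrm{gp}(G\boxtimes K_n)=n\cdot \mathrm{gp}(G)$. Moreover, if $\mathrm{gp}(G)=\omega(G_{\rm SR})$, then $\mathrm{gp}(G\boxtimes K_n)=\omega((G\boxtimes K_n)_{\rm SR})$.
   Context: All graphs are finite and simple. The strong product $G\boxtimes H$ has vertex set $V(G)\times V(H)$, with distinct $(g,h),(g',h')$ adjacent iff ($g=g'$ or $gg'\in E(G)$) and ($h=h'$ or $hh'\in E(H)$). For a connected graph $G$, a set $S\subseteq V(G)$ is a general position set if no three pairwise distinct vertices of $S$ lie on a common geodesic (shortest path); $\mathrm{gp}(G)$ is the maximum cardinality of a general position set. A vertex $u$ is maximally distant from $v$ if every neighbor $w$ of $u$ satisfies $d_G(v,w)\le d_G(u,v)$; $u,v$ are mutually maximally distant (MMD) if each is maximally distant from the other. The strong resolving graph $G_{\rm SR}$ has vertex set $V(G)$, distinct vertices adjacent iff MMD in $G$. $\omega$ is the clique number. *)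

(* Simple graphs on a finType T given by an edge relation
   e : rel T (assumed symmetric and irreflexive in the theorem). *)
From mathcomp Require Import all_boot.
Set Implicit Arguments. Unset Strict Implicit. Unset Printing Implicit Defensive.

Section Graphs.
Variable T : finType.
Variable e : rel T.

Definition connected_graph : Prop := forall x y : T, connect e x y.

Definition walk_of_length (k : nat) (x y : T) : bool :=
  [exists p : k.-tuple T, path e x p && (last x p == y)].

(* shortest-path distance: least k with a walk of length k from x to y
   (a shortest walk has < #|T| edges; value #|T| if y is unreachable,
   which never happens in a connected graph). *)
Definition dist (x y : T) : nat :=
  find (fun k => walk_of_length k x y) (iota 0 #|T|).

Definition on_common_geodesic (u v w : T) : bool :=
  [exists x : T, exists y : T, exists p : (dist x y).-tuple T,
     [&& path e x p, last x p == y,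
         u \in x :: (p : seq T), v \in x :: (p : seq T) & w \in x :: (p : seq T)]].

Definition gp_set (S : {set T}) : bool :=
  [forall u in S, forall v in S, forall w in S,
     [&& u != v, v != w & u != w] ==> ~~ on_common_geodesic u v w].

Definition gp : nat := \max_(S : {set T} | gp_set S) #|S|.

Definition max_distant (u v : T) : bool :=
  [forall w : T, e u w ==> (dist v w <= dist u v)].

Definition MMD (u v : T) : bool := max_distant u v && max_distant v u.

Definition clique (S : {set T}) : bool :=
  [forall u in S, forall v in S, (u != v) ==> e u v].

Definition omega : nat := \max_(S : {set T} | clique S) #|S|.
End Graphs.

Definition strong_resolving (T : finType) (e : rel T) : rel T :=
  fun u v => (u != v) && MMD e u v.

Definition strong_prod (T1 T2 : finType) (e1 : rel T1) (e2 : rel T2)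
  : rel (T1 * T2)%type :=
  fun x y => [&& x != y, (x.1 == y.1) || e1 x.1 y.1 & (x.2 == y.2) || e2 x.2 y.2].

Definition complete_graph (n : nat) : rel 'I_n := fun i j => i != j.
Arguments complete_graph n : clear implicits.

(* Vertices (x, i), (x, j) of the same fibre of G ⊠ K_n are twins at distance
   1, and for x != y the distance from (x, i) to (y, j) is d_G(x, y).  Hence a
   geodesic of G ⊠ K_n with both ends in one fibre has at most two vertices,
   and any other geodesic projects injectively onto a geodesic of G;
   conversely every geodesic of G lifts, with arbitrary fibre coordinates, to
   one of G ⊠ K_n.  So S × V(K_n) is in general position whenever S is, and
   the projection to G of a general position set S of G ⊠ K_n is in general
   position and has at least |S|/n vertices.  The same twin structure gives
   (G ⊠ K_n)_SR = G_SR ⊠ K_n, and the identical lift/projection argument for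
   cliques gives ω((G ⊠ K_n)_SR) = n · ω(G_SR). *)
From mathcomp Require Import all_boot.
Set Implicit Arguments. Unset Strict Implicit. Unset Printing Implicit Defensive.

Section Distance.
Variables (T : finType) (e : rel T).

Lemma walk_of_lengthP k x y :
  reflect (exists p, [/\ path e x p, last x p = y & size p = k])
          (walk_of_length e k x y).
Proof.
apply: (iffP existsP) => [[p /andP[pp /eqP lp]]|[p [pp lp sp]]].
  by exists (val p); rewrite size_tuple.
have sp' : size p == k by rewrite sp.
by exists (Tuple sp'); rewrite /= pp lp eqxx.
Qed.

Lemma dist_min k x y : walk_of_length e k x y -> dist e x y <= k.
Proof.
move=> walk_k; rewrite /dist; have [k_small|k_big] := ltnP k #|T|.
  rewrite leqNgt; apply/negP => /(before_find 0).
  by rewrite nth_iota // add0n walk_k.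
by apply: leq_trans (find_size _ _) _; rewrite size_iota.
Qed.

Lemma distxx x : dist e x x = 0.
Proof. by apply/eqP; rewrite -leqn0; apply: dist_min; apply/walk_of_lengthP; exists [::]. Qed.

Definition geodesic (x : T) (p : seq T) : bool :=
  path e x p && (size p == dist e x (last x p)).

Lemma geodesic_uniq x p : geodesic x p -> uniq (x :: p).
Proof.
case/andP=> pp /eqP; case: (shortenP pp) => p' pp' up' sub_p' sp.
have : dist e x (last x p') <= size p' by apply: dist_min; apply/walk_of_lengthP; exists p'.
rewrite -sp => le_p_p'; apply: (leq_size_uniq up') => // z.
by rewrite !inE => /predU1P[->|/sub_p' ->]; rewrite ?eqxx ?orbT.
Qed.

Lemma on_common_geodesicP u v w :
  reflect (exists x p, [/\ geodesic x p, u \in x :: p, v \in x :: p & w \in x :: p])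
          (on_common_geodesic e u v w).
Proof.
apply: (iffP existsP) => [[x /existsP[y /existsP[p /and5P[pp /eqP lp hu hv hw]]]]|].
  by exists x, (val p); rewrite /geodesic pp size_tuple lp eqxx.
case=> x [p [/andP[pp sp] hu hv hw]]; exists x.
by apply/existsP; exists (last x p); apply/existsP; exists (Tuple sp); rewrite /= pp eqxx hu hv hw.
Qed.

Lemma gp_setP (S : {set T}) :
  reflect (forall u v w, u \in S -> v \in S -> w \in S ->
             u != v -> v != w -> u != w -> ~~ on_common_geodesic e u v w)
          (gp_set e S).
Proof.
apply: (iffP forall_inP) => [gpS u v w uS vS wS uv vw uw|gpS u uS].
  by have /forall_inP/(_ v vS)/forall_inP/(_ w wS) := gpS u uS; rewrite uv vw uw.
apply/forall_inP => v vS; apply/forall_inP => w wS.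
by apply/implyP => /and3P[]; apply: gpS.
Qed.

Hypothesis e_connected : connected_graph e.

Lemma dist_walk x y : walk_of_length e (dist e x y) x y.
Proof.
have /connectP[p pp ->] := e_connected x y.
case: (shortenP pp) => p' pp' up' _.
have walk_p' : walk_of_length e (size p') x (last x p') by apply/walk_of_lengthP; exists p'.
have p'_small : size p' < #|T|.
  by have := max_card (mem (x :: p')); rewrite (card_uniqP up').
have has_walk : has (fun k => walk_of_length e k x (last x p')) (iota 0 #|T|).
  by apply/hasP; exists (size p'); rewrite ?mem_iota.
have := nth_find 0 has_walk; rewrite nth_iota ?add0n //.
by rewrite -{2}(size_iota 0 #|T|) -has_find.
Qed.

Lemma dist_eq0 x y : (dist e x y == 0) = (x == y).
Proof.
apply/eqP/eqP => [d0|->]; last exact: distxx.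
have /walk_of_lengthP[p [_ lp]] := dist_walk x y.
by rewrite d0 -lp => /size0nil ->.
Qed.

Hypothesis e_sym : symmetric e.

Lemma dist_sym x y : dist e x y = dist e y x.
Proof.
suff dist_le_sym a b : dist e a b <= dist e b a by apply/eqP; rewrite eqn_leq !dist_le_sym.
have /walk_of_lengthP[p [pp <- sp]] := dist_walk b a.
apply: dist_min; apply/walk_of_lengthP; exists (rev (belast b p)); split.
- by rewrite rev_path; apply: sub_path pp => u v /=; rewrite e_sym.
- by case: (p) => //= c p'; rewrite rev_cons last_rcons.
- by rewrite size_rev size_belast.
Qed.

End Distance.

Lemma three_le_size (A : eqType) (s : seq A) u v w :
  u != v -> v != w -> u != w -> u \in s -> v \in s -> w \in s -> 3 <= size s.
Proof.
move=> uv vw uw us vs ws; apply: (uniq_leq_size (s1 := [:: u; v; w])).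
  by rewrite /= !inE negb_or uv uw vw.
by move=> z; rewrite !inE => /or3P[]/eqP->.
Qed.

Lemma uniq_map_inj_in (A B : eqType) (f : A -> B) (s : seq A) :
  uniq (map f s) -> {in s &, injective f}.
Proof.
elim: s => //= a s IHs /andP[fa_s us] x y; rewrite !inE.
case/predU1P=> [->|xs] /predU1P[->|ys] //.
- by move=> fa; rewrite fa map_f in fa_s.
- by move=> fx; rewrite -fx map_f in fa_s.
- exact: IHs.
Qed.

Lemma strong_prod_completeE (T I : finType) (F : rel T) (X Y : T * I) :
  strong_prod F (fun i j : I => i != j) X Y = (X != Y) && ((X.1 == Y.1) || F X.1 Y.1).
Proof. by rewrite /strong_prod orbN andbT. Qed.

Section StrongProductComplete.
Variables (T I : finType) (e : rel T).
Hypotheses (e_irr : irreflexive e) (e_sym : symmetric e) (e_connected : connected_graph e).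

Local Notation E := (strong_prod e (fun i j : I => i != j)).

Lemma path_lift (c : T -> I) x i p :
  path e x p -> path E (x, i) [seq (y, c y) | y <- p].
Proof.
elim: p x i => //= y p IHp x i /andP[exy pp].
rewrite IHp // andbT strong_prod_completeE /= exy orbT andbT.
by apply: contraTneq exy => -[-> _]; rewrite e_irr.
Qed.

Lemma path_proj (X : T * I) p : path E X p ->
  exists q, [/\ path e X.1 q, last X.1 q = (last X p).1, size q <= size p
              & size q = size p -> q = map fst p].
Proof.
elim: p X => [|Y p IHp] X /=; first by exists [::].
case/andP=> eXY pp; have [q [pq lq sq qp]] := IHp Y pp.
move: eXY; rewrite strong_prod_completeE => /andP[_ /predU1P[XY|eXY]].
  exists q; rewrite XY; split=> //; first exact: leqW.
  by move=> sqp; move: sq; rewrite sqp ltnn.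
by exists (Y.1 :: q); split=> //=; [rewrite eXY | move=> [/qp ->]].
Qed.

Lemma walk_lift (c : T -> I) k x y :
  walk_of_length e k x y -> walk_of_length E k (x, c x) (y, c y).
Proof.
case/walk_of_lengthP=> p [pp <- <-]; apply/walk_of_lengthP.
exists [seq (z, c z) | z <- p].
by rewrite path_lift // (last_map (fun z => (z, c z))) size_map.
Qed.

Lemma strong_prod_connected : connected_graph E.
Proof.
move=> [x i] [y j]; apply: (@connect_trans _ _ (x, j)).
  have [-> //|ij] := eqVneq i j; apply: connect1.
  by rewrite strong_prod_completeE /= eqxx andbT; apply: contra_neq ij => -[].
have /connectP[p pp ->] := e_connected x y.
apply/connectP; exists [seq (z, j) | z <- p]; first exact: path_lift.
by rewrite (last_map (fun z => (z, j))).
Qed.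

Lemma dist_strong_prod (X Y : T * I) : X.1 != Y.1 -> dist E X Y = dist e X.1 Y.1.
Proof.
case: X Y => [x i] [y j] /= xy; apply/eqP; rewrite eqn_leq; apply/andP; split.
  pose c z := if z == x then i else j.
  have := walk_lift c (dist_walk e_connected x y).
  by rewrite /c eqxx eq_sym (negbTE xy); apply: dist_min.
have /walk_of_lengthP[p [pp lp <-]] := dist_walk strong_prod_connected (x, i) (y, j).
have [q [pq lq sq _]] := path_proj pp.
apply: leq_trans sq; apply: dist_min; apply/walk_of_lengthP; exists q.
by rewrite pq lq lp.
Qed.

Lemma dist_strong_prod_fibre (X Y : T * I) : X.1 = Y.1 -> dist E X Y <= 1.
Proof.
move=> XY1; have [->|XY] := eqVneq X Y; first by rewrite distxx.
apply: dist_min; apply/walk_of_lengthP; exists [:: Y].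
by split=> //=; rewrite strong_prod_completeE XY XY1 eqxx.
Qed.

Lemma geodesic_lift (c : T -> I) x p :
  geodesic e x p -> x != last x p -> geodesic E (x, c x) [seq (z, c z) | z <- p].
Proof.
case/andP=> pp /eqP sp xp; rewrite /geodesic path_lift //.
by rewrite (last_map (fun z => (z, c z))) size_map dist_strong_prod //= sp.
Qed.

Lemma geodesic_proj (X : T * I) p :
  geodesic E X p -> X.1 != (last X p).1 -> geodesic e X.1 (map fst p).
Proof.
case/andP=> pp /eqP sp Xp; have [q [pq lq sq qp]] := path_proj pp.
have dq : dist e X.1 (last X p).1 <= size q.
  by apply: dist_min; apply/walk_of_lengthP; exists q.
have sqp : size q = size p.
  by apply/eqP; rewrite eqn_leq sq sp (dist_strong_prod Xp).
by rewrite -(qp sqp) /geodesic pq lq sqp sp (dist_strong_prod Xp) eqxx.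
Qed.

Lemma geodesic_fibre (X : T * I) p :
  geodesic E X p -> X.1 = (last X p).1 -> size p <= 1.
Proof. by case/andP=> _ /eqP ->; apply: dist_strong_prod_fibre. Qed.

Lemma gp_set_setXT (S : {set T}) : gp_set e S -> gp_set E (setX S [set: I]).
Proof.
move=> /gp_setP gpS; apply/gp_setP => [[u i] [v j] [w k]].
rewrite !in_setX => /andP[uS _] /andP[vS _] /andP[wS _] UV VW UW.
apply/on_common_geodesicP => -[X [p [geo_p Up Vp Wp]]].
have [fibre|Xp] := eqVneq X.1 (last X p).1.
  have := three_le_size UV VW UW Up Vp Wp.
  by rewrite /= ltnS leqNgt ltnS (geodesic_fibre geo_p fibre).
have geo_q := geodesic_proj geo_p Xp.
have inj_fst : {in X :: p &, injective fst}.
  by apply: uniq_map_inj_in; exact: geodesic_uniq geo_q.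
have neq_fst A B : A \in X :: p -> B \in X :: p -> A != B -> A.1 != B.1.
  by move=> Ap Bp; apply: contra_neq; apply: inj_fst.
have /negP := gpS u v w uS vS wS (neq_fst _ _ Up Vp UV) (neq_fst _ _ Vp Wp VW)
                   (neq_fst _ _ Up Wp UW).
apply; apply/on_common_geodesicP; exists X.1, (map fst p).
by split; [|exact: (map_f fst Up)|exact: (map_f fst Vp)|exact: (map_f fst Wp)].
Qed.

Lemma gp_set_imset_fst (S : {set T * I}) : gp_set E S -> gp_set e (fst @: S).
Proof.
move=> /gp_setP gpS; apply/gp_setP => u' v' w'.
move=> /imsetP[[u i] uS ->] /imsetP[[v j] vS ->] /imsetP[[w k] wS ->] /= uv vw uw.
apply/on_common_geodesicP => -[x [p [geo_p up vp wp]]].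
have xp : x != last x p.
  apply: contraTneq (three_le_size uv vw uw up vp wp) => xp.
  by case/andP: geo_p => _ /eqP; rewrite -xp distxx => /size0nil ->.
pose c z := if z == u then i else if z == v then j else k.
have lift_in a : a \in x :: p -> (a, c a) \in (x, c x) :: [seq (z, c z) | z <- p].
  exact: (map_f (fun z => (z, c z))).
have cu : c u = i by rewrite /c eqxx.
have cv : c v = j by rewrite /c eq_sym (negbTE uv) eqxx.
have cw : c w = k by rewrite /c eq_sym (negbTE uw) eq_sym (negbTE vw).
have neq_pair (a b : T) (l m : I) : a != b -> (a, l) != (b, m) by apply: contra_neq => -[].
have /negP := gpS _ _ _ uS vS wS (neq_pair _ _ _ _ uv) (neq_pair _ _ _ _ vw)
                   (neq_pair _ _ _ _ uw).
apply; apply/on_common_geodesicP; exists (x, c x), [seq (z, c z) | z <- p].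
by rewrite -{1}cu -{1}cv -{1}cw !lift_in // geodesic_lift.
Qed.

Lemma max_distant_strong_prod_fibre (X Y : T * I) :
  X != Y -> X.1 = Y.1 -> max_distant E X Y.
Proof.
move=> XY XY1; apply/forall_inP => W; rewrite strong_prod_completeE => /andP[_ XW].
have dXY : 0 < dist E X Y by rewrite lt0n (dist_eq0 strong_prod_connected).
apply: leq_trans dXY; have [//|YW] := eqVneq Y.1 W.1; first exact: dist_strong_prod_fibre.
move: XW; rewrite XY1 (negbTE YW) /= => eYW.
rewrite dist_strong_prod //; apply: dist_min; apply/walk_of_lengthP; exists [:: W.1].
by split=> //=; rewrite eYW.
Qed.

Lemma max_distant_strong_prod (X Y : T * I) :
  X.1 != Y.1 -> max_distant E X Y = max_distant e X.1 Y.1.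
Proof.
case: X Y => [x i] [y j] /= xy; rewrite /max_distant (@dist_strong_prod (x, i) (y, j)) //.
apply/forall_inP/forall_inP => [mdE z exz|md [z k]].
  have xz : (x, i) != (z, i) by apply: contraTneq exz => -[<-]; rewrite e_irr.
  have := mdE (z, i); rewrite strong_prod_completeE xz exz orbT => /(_ isT).
  have [<-|yz] := eqVneq y z; first by rewrite distxx.
  by rewrite dist_strong_prod.
rewrite strong_prod_completeE /= => /andP[_ xz].
have [<-|yz] := eqVneq y z.
  apply: leq_trans (@dist_strong_prod_fibre (y, j) (y, k) erefl) _.
  by rewrite lt0n (dist_eq0 e_connected).
rewrite dist_strong_prod //=; case/predU1P: xz => [<-|]; last exact: md.
by rewrite dist_sym.
Qed.

Lemma strong_resolving_strong_prod :
  strong_resolving E =2 strong_prod (strong_resolving e) (fun i j : I => i != j).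
Proof.
move=> X Y; rewrite strong_prod_completeE /strong_resolving.
have [//|XY /=] := eqVneq X Y.
have [XY1|XY1] := eqVneq X.1 Y.1.
  by rewrite /MMD !max_distant_strong_prod_fibre // eq_sym.
by rewrite /MMD !max_distant_strong_prod // eq_sym.
Qed.

End StrongProductComplete.

Lemma cliqueP (T : finType) (F : rel T) (S : {set T}) :
  reflect {in S &, forall u v, u != v -> F u v} (clique F S).
Proof.
apply: (iffP forall_inP) => [clS u v uS vS|clS u uS].
  by have /forall_inP/(_ v vS)/implyP := clS u uS.
by apply/forall_inP => v vS; apply/implyP; apply: clS.
Qed.

Lemma eq_omega (T : finType) (F G : rel T) : F =2 G -> omega F = omega G.
Proof.
move=> FG; apply: eq_bigl => S; apply: eq_forallb_in => u _.
by apply: eq_forallb_in => v _; rewrite FG.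
Qed.

Section CliquesStrongProductComplete.
Variables (T I : finType) (F : rel T).

Local Notation FK := (strong_prod F (fun i j : I => i != j)).

Lemma clique_setXT (S : {set T}) : clique F S -> clique FK (setX S [set: I]).
Proof.
move=> /cliqueP clS; apply/cliqueP => [[u i] [v j]].
rewrite !in_setX => /andP[uS _] /andP[vS _] UV.
rewrite strong_prod_completeE UV /=; have [//|uv] := eqVneq u v.
by rewrite clS.
Qed.

Lemma clique_imset_fst (C : {set T * I}) : clique FK C -> clique F (fst @: C).
Proof.
move=> /cliqueP clC; apply/cliqueP => x y /imsetP[X XC ->] /imsetP[Y YC ->] XY1.
have XY : X != Y by apply: contra_neq XY1 => ->.
have := clC X Y XC YC XY.
by rewrite strong_prod_completeE (negbTE XY1) => /andP[].
Qed.

End CliquesStrongProductComplete.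

Lemma bigmax_card_setXT (T I : finType) (PT : pred {set T}) (PTI : pred {set T * I}) :
  (forall S, PT S -> PTI (setX S [set: I])) -> (forall S, PTI S -> PT (fst @: S)) ->
  \max_(S | PTI S) #|S| = #|I| * \max_(S | PT S) #|S|.
Proof.
move=> lift proj; apply/eqP; rewrite eqn_leq; apply/andP; split.
  apply/bigmax_leqP => S PTI_S.
  have S_fibres : S \subset setX (fst @: S) [set: I].
    apply/subsetP => -[x i] xiS; rewrite in_setX in_setT andbT.
    exact: (imset_f fst xiS).
  apply: leq_trans (subset_leq_card S_fibres) _.
  by rewrite cardsX cardsT mulnC leq_mul2l leq_bigmax_cond ?orbT ?proj.
elim/big_ind: _ => [|a b ha hb|S PT_S]; first by rewrite muln0.
  by rewrite /maxn; case: ifP.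
by apply: leq_trans (leq_bigmax_cond _ (lift _ PT_S)); rewrite cardsX cardsT mulnC.
Qed.

Lemma omega_strong_prod_complete (T I : finType) (F : rel T) :
  omega (strong_prod F (fun i j : I => i != j)) = #|I| * omega F.
Proof. by apply: bigmax_card_setXT; [apply: clique_setXT | apply: clique_imset_fst]. Qed.

Lemma gp_strong_prod_complete (T I : finType) (e : rel T) :
  irreflexive e -> connected_graph e ->
  gp (strong_prod e (fun i j : I => i != j)) = #|I| * gp e.
Proof.
move=> e_irr e_connected.
by apply: bigmax_card_setXT; [apply: gp_set_setXT | apply: gp_set_imset_fst].
Qed.

Theorem proposition4p3 (T : finType) (e : rel T) (n : nat) :
  symmetric e -> irreflexive e -> connected_graph e -> 0 < n ->
  gp (strong_prod e (complete_graph n)) = n * gp e /\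
  (gp e = omega (strong_resolving e) ->
   gp (strong_prod e (complete_graph n))
   = omega (strong_resolving (strong_prod e (complete_graph n)))).
Proof.
move=> e_sym e_irr e_connected _.
have gp_prod : gp (strong_prod e (complete_graph n)) = n * gp e.
  by rewrite gp_strong_prod_complete // card_ord.
split=> // gp_omega.
rewrite gp_prod gp_omega (eq_omega (strong_resolving_strong_prod e_irr e_sym e_connected)).
by rewrite omega_strong_prod_complete card_ord.
Qed.
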